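(* For $n\ge0$ let $Q_n^L(x)=\sum_{r=0}^{n}\left[\binom{n}{r}\sum_{\ell=0}^{r}\binom{r}{\ell}\frac{1}{\ell!}\right](-x)^r$ (the coefficient polynomials of the linear transformation $x^n\mapsto L_n(x)$). Then for every $n$, all roots of $Q_n^L$ are real and lie in the open interval $(0,1)$, and the roots of $Q_n^L$ and $Q_{n+1}^L$ strictly interlace.
   Context: $L_n(x)=\sum_{k=0}^n\binom{n}{k}\frac{(-x)^k}{k!}$ is the $n$th Laguerre polynomial. Strict interlacing of the roots of a degree-$n$ polynomial and a degree-$(n+1)$ polynomial means their roots $s_1<\dots<s_{n+1}$ and $r_1<\dots<r_n$ are simple and satisfy $s_1<r_1<s_2<r_2<\cdots<r_n<s_{n+1}$. *)

(* Polynomials over algC (algebraic complex numbers), which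
   contain all complex roots of rational-coefficient polynomials. *)
From HB Require Import structures.
From mathcomp Require Import all_boot all_order all_algebra all_field.
Set Implicit Arguments. Unset Strict Implicit. Unset Printing Implicit Defensive.
Import Order.TTheory GRing.Theory Num.Theory.
Local Open Scope ring_scope.

Definition QL (n : nat) : {poly algC} :=
  \poly_(r < n.+1)
    (('C(n, r))%:R * (\sum_(l < r.+1) ('C(r, l))%:R / (l`!)%:R) * (-1) ^+ r).

(* With Q_n(x) = (1 - x)^n L_n(x / (1 - x)) = sum_k C(n,k) (-1)^k / k! x^k (1 - x)^(n-k),
   the Laguerre recurrence becomes
     (n+1) Q_(n+1) = ((2n+1)(1-x) - x) Q_n - n (1-x)^2 Q_(n-1),
   so at a root of Q_n in (0,1) the values of Q_(n+1) and Q_(n-1) have opposite signs.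
   Hence if Q_(n-1) alternates in sign at the roots x_0 < ... < x_(n-1) of Q_n in (0,1),
   then Q_(n+1) alternates in sign at 0 < x_0 < ... < x_(n-1) < 1 (Q_(n+1)(0) = 1 and
   Q_(n+1)(1) = (-1)^(n+1)/(n+1)!), and the intermediate value theorem yields n+1 roots
   of Q_(n+1) interlacing with the x_i, which are all of its roots by degree.  Writing
   Q_n as a product over its roots shows that it alternates in sign at these new roots,
   which closes the induction. *)

From HB Require Import structures.
From mathcomp Require Import all_boot all_order all_algebra all_field.
From mathcomp Require Import zify ring polyrcf.
Import Order.TTheory GRing.Theory Num.Theory.
Local Open Scope ring_scope.
Set Implicit Arguments. Unset Strict Implicit. Unset Printing Implicit Defensive.

Lemma big_ord_widen0 (V : nmodType) m n (F : nat -> V) : (m <= n)%N ->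
  (forall i, (m <= i)%N -> F i = 0) -> \sum_(i < m) F i = \sum_(i < n) F i.
Proof.
move=> le_mn F0; rewrite (big_ord_widen _ _ le_mn) big_mkcond /=.
by apply: eq_bigr => i _; case: ltnP => // /F0 ->.
Qed.

Lemma bin_trinomial n l i : ('C(n, l + i) * 'C(l + i, l) = 'C(n, l) * 'C(n - l, i))%N.
Proof.
have [le_li_n|lt_n_li] := leqP (l + i) n; last first.
  rewrite bin_small // mul0n; have [le_ln|/bin_small->] := leqP l n; last by [].
  by rewrite (@bin_small (n - l) i) ?muln0 //; lia.
have fact_pos : (0 < l`! * i`! * (n - l - i)`!)%N by rewrite !muln_gt0 !fact_gt0.
apply/eqP; rewrite -(eqn_pmul2r fact_pos); apply/eqP.
have e1 := bin_fact le_li_n; have e2 := @bin_fact (l + i) l (leq_addr _ _).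
have e3 := @bin_fact (n - l) i ltac:(lia); have e4 := @bin_fact n l ltac:(lia).
rewrite addKn in e2; rewrite -subnDA in e3 *.
transitivity n`!; first by rewrite -e1 -e2; ring.
by rewrite -e4 -e3; ring.
Qed.

Lemma sum_bin_trinomial (V : comPzRingType) (y : V) n l :
  \sum_(r < n.+1) y ^+ r *+ ('C(n, r) * 'C(r, l)) = y ^+ l * (1 + y) ^+ (n - l) *+ 'C(n, l).
Proof.
have [le_ln|lt_nl] := leqP l n; last first.
  rewrite bin_small // mulr0n big1 // => r _; rewrite (@bin_small r l) ?muln0 //.
  by have := ltn_ord r; lia.
rewrite exprDn mulr_sumr -sumrMnl.
rewrite -(big_mkord xpredT (fun r => y ^+ r *+ ('C(n, r) * 'C(r, l)))).
rewrite (big_cat_nat (leq0n l) (leqW le_ln)) /=.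
rewrite big1_seq ?add0r; last first.
  by move=> i; rewrite mem_iota add0n subn0 => /andP[_ lt_il]; rewrite (@bin_small i l) ?muln0.
rewrite -[X in \sum_(X <= _ < _) _](add0n l) big_addn big_mkord subSn //.
apply: eq_bigr => i _; rewrite expr1n mul1r mulrnAr -mulrnA -exprD addnC.
by rewrite bin_trinomial mulnC.
Qed.

Lemma bin_laguerre_rec n k :
  ((n.+2) * 'C(n.+2, k.+1) + n.+1 * 'C(n, k.+1) =
   (2 * n + 3) * 'C(n.+1, k.+1) + k.+1 * 'C(n.+1, k))%N.
Proof.
case: (ltngtP k n.+1) => [lt_kn1|lt_n1k|->].
- have F1 := mul_bin_left n.+1 k; have F2 := mul_bin_down n.+1 k.+1.
  have F3 := binS n.+1 k; rewrite /= in F2; nia.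
- by rewrite !bin_small //; lia.
- by rewrite !binn !bin_small //; lia.
Qed.

Lemma nat_bounded_choice (T : Type) (P : nat -> T -> Prop) (d : T) n :
  (forall j, (j < n)%N -> exists w, P j w) ->
  exists z : nat -> T, forall j, (j < n)%N -> P j (z j).
Proof.
elim: n => [|n IHn] exP; first by exists (fun=> d).
have [z Pz] := IHn (fun j lt_jn => exP j (ltnW lt_jn)).
have [w Pw] := exP n (ltnSn n).
exists (fun j => if j == n then w else z j) => j; rewrite ltnS leq_eqVlt.
by case: eqP => [->|_] //= /Pz.
Qed.

Lemma prod_XsubC_of_roots (F : fieldType) (p : {poly F}) s :
  p != 0 -> (size p <= (size s).+1)%N -> uniq s -> all (root p) s ->
  p = lead_coef p *: \prod_(w <- s) ('X - w%:P).
Proof.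
move=> p_neq0 size_p s_uniq s_roots.
apply: all_roots_prod_XsubC; rewrite ?uniq_rootsE //.
by apply/eqP; rewrite eqn_leq size_p max_poly_roots.
Qed.

Lemma root_scaled_prod_XsubC (F : idomainType) (c : F) s t : c != 0 ->
  root (c *: \prod_(w <- s) ('X - w%:P)) t = (t \in s).
Proof. by move=> c_neq0; rewrite rootZ // root_prod_XsubC. Qed.

Lemma scaled_prod_XsubC_simple (F : fieldType) (c : F) s t :
  c != 0 -> uniq s -> t \in s -> ~~ root (c *: \prod_(w <- s) ('X - w%:P))^`() t.
Proof.
move=> c_neq0 s_uniq t_in_s; rewrite derivZ rootZ // rootE.
have := separable_prod_XsubC s; rewrite s_uniq unlock => /coprimep_root; apply.
by rewrite root_prod_XsubC.
Qed.

Section RealRoots.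
Variable R : realDomainType.

Definition increasing_upto m (x : nat -> R) := forall i j, (i < j < m)%N -> x i < x j.

(* [t] lies strictly between [x (i - 1)] and [x i], reading [x (-1)] as -oo and
   [x n] as +oo. *)
Definition in_gap n (x : nat -> R) i t :=
  forall k, (k < n)%N -> if (i <= k)%N then t < x k else x k < t.

Lemma increasing_upto_le m x i j : increasing_upto m x -> (i <= j < m)%N -> x i <= x j.
Proof.
move=> x_incr /andP[]; rewrite leq_eqVlt => /orP[/eqP-> //|lt_ij lt_jm].
by rewrite ltW // x_incr // lt_ij.
Qed.

Lemma increasing_upto_uniq m x : increasing_upto m x -> uniq (mkseq x m).
Proof.
move=> x_incr; rewrite map_inj_in_uniq ?iota_uniq // => i j.
rewrite !mem_iota /= => lt_im lt_jm xij; apply/eqP.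
case: ltngtP => // [lt_ij|lt_ji]; [move: (x_incr i j) | move: (x_incr j i)];
  by rewrite ?lt_ij ?lt_ji ?lt_im ?lt_jm xij ltxx; apply.
Qed.

Lemma in_gap_notin n x i t : in_gap n x i t -> t \notin mkseq x n.
Proof.
move=> t_gap; apply/mapP => -[k]; rewrite mem_iota => /andP[_ lt_kn] t_eq.
by have := t_gap k lt_kn; rewrite t_eq ltxx; case: ifP.
Qed.

Lemma in_gap_count n x i t : (i <= n)%N -> in_gap n x i t ->
  count (fun w => t < w) (mkseq x n) = (n - i)%N.
Proof.
move=> le_in t_gap; rewrite count_map.
transitivity (count (fun k => i <= k)%N (iota 0 n)).
  apply: eq_in_count => k; rewrite mem_iota => /andP[_ lt_kn] /=.
  by have := t_gap k lt_kn; case: ifP => // _ /ltW; rewrite leNgt => /negbTE.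
rewrite -{1}(subnKC le_in) iotaD count_cat add0n.
rewrite (eq_in_count (a2 := pred0)) ?count_pred0; last first.
  by move=> k; rewrite mem_iota add0n => /andP[_]; rewrite ltnNge => /negbTE.
by rewrite (eq_in_count (a2 := predT)) ?count_predT ?size_iota // => k;
  rewrite mem_iota => /andP[].
Qed.

Lemma sign_prod_subr (s : seq R) t : t \notin s ->
  0 < (-1) ^+ count (fun w => t < w) s * \prod_(w <- s) (t - w).
Proof.
elim: s => [|w s IHs]; first by rewrite big_nil mulr1 ltr01.
rewrite in_cons negb_or => /andP[t_neq_w t_notin_s] /=.
rewrite big_cons exprD mulrACA; apply: mulr_gt0; last exact: IHs.
case: (ltP t w) => [lt_tw|le_wt]; first by rewrite /= expr1 mulN1r oppr_gt0 subr_lt0.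
by rewrite /= expr0 mul1r subr_gt0 lt_neqAle le_wt eq_sym t_neq_w.
Qed.

Lemma in_gap_horner_sign (p : {poly R}) c n x i j t u :
  p = c *: \prod_(w <- mkseq x n) ('X - w%:P) -> c != 0 ->
  (i <= n)%N -> (j <= n)%N -> in_gap n x i t -> in_gap n x j u ->
  0 < (-1) ^+ (i + j) * (p.[t] * p.[u]).
Proof.
move=> -> c_neq0 le_in le_jn t_gap u_gap.
have sign_t := sign_prod_subr (in_gap_notin t_gap).
have sign_u := sign_prod_subr (in_gap_notin u_gap).
rewrite (in_gap_count le_in t_gap) in sign_t.
rewrite (in_gap_count le_jn u_gap) in sign_u.
have horner_p v : (c *: \prod_(w <- mkseq x n) ('X - w%:P)).[v] =
    c * \prod_(w <- mkseq x n) (v - w).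
  by rewrite hornerZ horner_prod; under eq_bigr do rewrite hornerXsubC.
have sign_ij : (-1) ^+ (i + j) = (-1) ^+ (n - i) * (-1) ^+ (n - j) :> R.
  rewrite -exprD -[LHS]signr_odd -[RHS]signr_odd !oddD !oddB //.
  by case: (odd i); case: (odd j); case: (odd n).
rewrite !horner_p sign_ij.
move: sign_t sign_u; set Pt := \prod_(w <- _) (t - w); set Pu := \prod_(w <- _) (u - w).
move=> sign_t sign_u.
have -> : (-1) ^+ (n - i) * (-1) ^+ (n - j) * (c * Pt * (c * Pu)) =
    c ^+ 2 * (((-1) ^+ (n - i) * Pt) * ((-1) ^+ (n - j) * Pu)) by ring.
apply: mulr_gt0; last exact: mulr_gt0.
by rewrite exprn_even_gt0 //= c_neq0.
Qed.

Lemma bracket_in_gap m (q z : nat -> R) : increasing_upto m.+1 q ->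
  (forall j, (j < m)%N -> q j < z j < q j.+1) ->
  forall i, (i < m)%N -> in_gap m.+1 q i.+1 (z i).
Proof.
move=> q_incr z_in i lt_im k lt_km; have /andP[q_lt_z z_lt_q] := z_in i lt_im.
case: ifP => [le_ik|/negbT]; last rewrite -ltnNge ltnS => le_ki.
  by apply: (lt_le_trans z_lt_q); apply: increasing_upto_le q_incr _; rewrite le_ik.
by apply: le_lt_trans q_lt_z; apply: increasing_upto_le q_incr _; rewrite le_ki ltnW.
Qed.

End RealRoots.

Section Interlacing.
Variable R : rcfType.

Lemma alternating_signs_roots (p : {poly R}) m (q : nat -> R) :
  increasing_upto m.+1 q -> (forall j, (j <= m)%N -> 0 < (-1) ^+ j * p.[q j]) ->
  exists z : nat -> R, forall j, (j < m)%N -> q j < z j < q j.+1 /\ root p (z j).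
Proof.
move=> q_incr q_sign.
suff root_j j : (j < m)%N -> exists w, q j < w < q j.+1 /\ root p w.
  exact: (nat_bounded_choice (P := fun j w => q j < w < q j.+1 /\ root p w) 0 root_j).
move=> lt_jm.
have sign_change : p.[q j] * p.[q j.+1] < 0.
  have := mulr_gt0 (q_sign j (ltnW lt_jm)) (q_sign j.+1 lt_jm).
  by rewrite exprS mulN1r mulNr mulrN oppr_gt0 mulrACA -expr2 sqrr_sign mul1r.
have lt_q : q j < q j.+1 by apply: q_incr; rewrite ltnSn.
by have [w] := poly_ivtoo (ltW lt_q) sign_change; rewrite in_itv /=; exists w.
Qed.

Variable P : nat -> {poly R}.
Hypothesis P_size : forall n, (size (P n) <= n.+1)%N.
Hypothesis P_at0 : forall n, 0 < (P n).[0].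
Hypothesis P_at1 : forall n, 0 < (-1) ^+ n * (P n).[1].
(* The three-term recurrence, evaluated at a root of [P n.+1]. *)
Hypothesis P_rec : forall n y, 0 < y < 1 -> root (P n.+1) y ->
  exists2 c, 0 < c & (P n.+2).[y] = - (c * (P n).[y]).

Definition alternating_roots n (x : nat -> R) :=
  increasing_upto n x /\
  forall i, (i < n)%N ->
    [/\ 0 < x i < 1, root (P n) (x i) & 0 < (-1) ^+ i * (P n.-1).[x i]].

Lemma alternating_roots_factor n x : alternating_roots n x ->
  exists2 c, c != 0 & P n = c *: \prod_(w <- mkseq x n) ('X - w%:P).
Proof.
have P_neq0 : P n != 0 by apply: contraTneq (P_at0 n) => ->; rewrite horner0 ltxx.
move=> [x_incr x_roots]; exists (lead_coef (P n)); first by rewrite lead_coef_eq0.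
apply: prod_XsubC_of_roots => //.
- by rewrite size_mkseq.
- exact: increasing_upto_uniq.
- apply/allP => w /mapP[i]; rewrite mem_iota => /andP[_ lt_in] ->.
  by have [] := x_roots i lt_in.
Qed.

Lemma alternating_roots_sign n x i t : alternating_roots n x ->
  (i <= n)%N -> in_gap n x i t -> 0 < (-1) ^+ i * (P n).[t].
Proof.
move=> x_alt le_in t_gap; have [c c_neq0 P_fact] := alternating_roots_factor x_alt.
have gap0 : in_gap n x 0 0 by move=> k lt_kn; have [/andP[]] := x_alt.2 k lt_kn.
have := in_gap_horner_sign P_fact c_neq0 (leq0n n) le_in gap0 t_gap.
by rewrite add0n mulrCA pmulr_rgt0.
Qed.

Definition pad01 n (x : nat -> R) j :=
  if j is j'.+1 then (if (j' < n)%N then x j' else 1) else 0.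

Lemma pad01_increasing n x : alternating_roots n x -> increasing_upto n.+2 (pad01 n x).
Proof.
move=> [x_incr x_in] i [//|j] /andP[lt_ij lt_jn] /=.
case: i lt_ij => [_|i lt_ij] /=.
  by case: ifP => [/x_in[/andP[]]|_] //; rewrite ltr01.
have lt_in : (i < n)%N by lia.
rewrite lt_in; case: ifP => [lt_jn'|_]; first by apply: x_incr; lia.
by have [/andP[]] := x_in i lt_in.
Qed.

Lemma pad01_sign n x : alternating_roots n x ->
  forall j, (j <= n.+1)%N -> 0 < (-1) ^+ j * (P n.+1).[pad01 n x j].
Proof.
move=> [_ x_in] [|j] le_jn /=; first by rewrite mul1r.
case: ifPn => [lt_jn|]; last by rewrite -leqNgt => le_nj; have -> : j = n by lia.
case: n x_in lt_jn {le_jn} => [//|m] x_in lt_jm.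
have [x_in01 x_root x_sign] := x_in j lt_jm.
have [c c_gt0 ->] := P_rec x_in01 x_root.
by rewrite exprS mulN1r mulrNN mulrCA mulr_gt0.
Qed.

Lemma in_gap_pad01 n x i t : in_gap n.+2 (pad01 n x) i.+1 t -> in_gap n x i t.
Proof.
by move=> t_gap k lt_kn; have := t_gap k.+1 (leqW lt_kn); rewrite /= lt_kn ltnS.
Qed.

Lemma alternating_roots_succ n x : alternating_roots n x ->
  exists2 z, alternating_roots n.+1 z & forall i, (i < n)%N -> z i < x i < z i.+1.
Proof.
move=> x_alt; set q := pad01 n x; have q_incr : increasing_upto n.+2 q.
  exact: pad01_increasing.
have [z z_in] := alternating_signs_roots q_incr (pad01_sign x_alt).
have q_lt_z i : (i < n.+1)%N -> q i < z i by move=> /z_in[/andP[]].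
have z_lt_q i : (i < n.+1)%N -> z i < q i.+1 by move=> /z_in[/andP[]].
have q_le i j : (i <= j < n.+2)%N -> q i <= q j by apply: increasing_upto_le.
exists z; last first.
  move=> i lt_in; have := z_lt_q i (ltnW lt_in); have := q_lt_z i.+1 lt_in.
  by rewrite /q /= lt_in => -> ->.
split=> [i j /andP[lt_ij lt_jn]|i lt_in].
  apply: lt_trans (z_lt_q i (ltn_trans lt_ij lt_jn)) (le_lt_trans _ (q_lt_z j lt_jn)).
  by apply: q_le; lia.
split.
- apply/andP; split.
    by apply: le_lt_trans (q_lt_z i lt_in); apply: (q_le 0%N); lia.
  apply: lt_le_trans (z_lt_q i lt_in) _; have -> : 1 = q n.+1 by rewrite /q /= ltnn.
  by apply: q_le; lia.
- by have [] := z_in i lt_in.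
- apply: alternating_roots_sign x_alt _ _; first by rewrite -ltnS.
  apply: in_gap_pad01; apply: bracket_in_gap q_incr _ i lt_in.
  by move=> j /z_in[].
Qed.

Lemma alternating_roots_exist n : exists x, alternating_roots n x.
Proof.
elim: n => [|n [x /alternating_roots_succ[z z_alt _]]]; last by exists z.
by exists (fun=> 0); split=> [i j|i]; rewrite ?ltn0 ?andbF.
Qed.

End Interlacing.

Section Homogenization.
Variable F : comNzRingType.

(* [homog m c] is (1 - X)^m * sum_k c_k (X / (1 - X))^k. *)
Definition homog m (c : nat -> F) : {poly F} :=
  \sum_(k < m.+1) c k *: ('X ^+ k * (1 - 'X) ^+ (m - k)).

Lemma mul_1subX_homog m c : c m.+1 = 0 -> (1 - 'X) * homog m c = homog m.+1 c.
Proof.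
move=> cm0; rewrite [homog m.+1 c]big_ord_recr /= cm0 scale0r addr0 mulr_sumr.
apply: eq_bigr => k _; rewrite -scalerAr mulrCA -exprS subSn //.
exact: ltnSE.
Qed.

Lemma mulX_homog m c :
  'X * homog m c = homog m.+1 (fun k => if k is k'.+1 then c k' else 0).
Proof.
rewrite [homog m.+1 _]big_ord_recl /= scale0r add0r mulr_sumr.
by apply: eq_bigr => k _; rewrite -scalerAr mulrA -exprS.
Qed.

Lemma homog_at0 m c : (homog m c).[0] = c 0%N.
Proof.
rewrite horner_sum big_ord_recl big1 => [|k _]; rewrite !hornerE /=.
  by rewrite subr0 expr1n !mulr1.
by rewrite expr0n /bump /= mulr0 mul0r.
Qed.

Lemma homog_at1 m c : (homog m c).[1] = c m.
Proof.
rewrite horner_sum big_ord_recr big1 => [|k _]; rewrite !hornerE /=.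
  by rewrite subnn expr1n !mulr1.
by rewrite subrr expr0n subn_eq0 leqNgt ltn_ord /= mulr0.
Qed.

End Homogenization.

Definition QLpoly (F : fieldType) n : {poly F} :=
  \poly_(r < n.+1)
    (('C(n, r))%:R * (\sum_(l < r.+1) ('C(r, l))%:R / (l`!)%:R) * (-1) ^+ r).

Lemma QL_QLpoly n : QL n = QLpoly algC n.
Proof. by []. Qed.

Lemma map_QLpoly (F K : fieldType) (f : {rmorphism F -> K}) n :
  map_poly f (QLpoly F n) = QLpoly K n.
Proof.
apply/polyP => r; rewrite coef_map !coef_poly; case: ifP => _; last exact: rmorph0.
rewrite /= !rmorphM rmorph_nat rmorphXn rmorphN1 rmorph_sum /=; congr (_ * _ * _).
by apply: eq_bigr => l _; rewrite fmorph_div !rmorph_nat.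
Qed.

Section LaguerreCoef.
Variable F : fieldType.

Definition laguerre_coef m k : F := ('C(m, k))%:R * (-1) ^+ k / (k`!)%:R.

Lemma laguerre_coef_small m k : (m < k)%N -> laguerre_coef m k = 0.
Proof. by move=> lt_mk; rewrite /laguerre_coef bin_small // !mul0r. Qed.

Lemma QLpolyE n : QLpoly F n = homog n (laguerre_coef n).
Proof.
rewrite /QLpoly poly_def; apply/esym.
transitivity (\sum_(l < n.+1) \sum_(r < n.+1)
   (((l`!)%:R)^-1 * ('C(n, r) * 'C(r, l))%:R * (-1) ^+ r) *: ('X ^+ r : {poly F})).
  apply: eq_bigr => l _.
  transitivity ((((l`!)%:R)^-1)%:P *
    ((- 'X) ^+ l * (1 + - 'X) ^+ (n - l) *+ 'C(n, l)) : {poly F}).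
    rewrite /laguerre_coef -mul_polyC !polyCM !rmorphXn /= rmorphN1 !polyC_natr.
    by rewrite (exprNn ('X : {poly F})); ring.
  rewrite -sum_bin_trinomial mulr_sumr; apply: eq_bigr => r _.
  rewrite -mul_polyC !polyCM !rmorphXn /= rmorphN1 !polyC_natr exprNn.
  by rewrite -mulr_natr; ring.
rewrite exchange_big /=; apply: eq_bigr => r _.
rewrite -scaler_suml; congr (_ *: _).
rewrite (@big_ord_widen0 _ r.+1 n.+1 (fun l => ('C(r, l))%:R / (l`!)%:R)) //; last first.
  by move=> l lt_rl; rewrite bin_small // mul0r.
rewrite mulr_sumr mulr_suml; apply: eq_bigr => l _.
by rewrite natrM; ring.
Qed.

Lemma QLpoly_at0 n : (QLpoly F n).[0] = 1.
Proof. by rewrite QLpolyE homog_at0 /laguerre_coef bin0 expr0 fact0 !mulr1 divr1. Qed.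

Lemma QLpoly_at1 n : (QLpoly F n).[1] = (-1) ^+ n / (n`!)%:R.
Proof. by rewrite QLpolyE homog_at1 /laguerre_coef binn mul1r. Qed.

End LaguerreCoef.

Section LaguerreRecurrence.
Variable R : numFieldType.
Local Notation c := (@laguerre_coef R).
Local Notation Q := (QLpoly R).

Lemma laguerre_coef_rec n k : (n.+2)%:R * c n.+2 k =
  (2 * n + 3)%:R * c n.+1 k - (if k is k'.+1 then c n.+1 k' else 0) - (n.+1)%:R * c n k.
Proof.
case: k => [|k].
  rewrite /laguerre_coef !bin0 expr0 fact0 !mulr1 divr1 subr0.
  by rewrite -[n.+2]addn2 -[n.+1]addn1 !natrD; ring.
have bin_rec : ((n.+2)%:R * ('C(n.+2, k.+1))%:R : R) =
  (2 * n + 3)%:R * ('C(n.+1, k.+1))%:R + (k.+1)%:R * ('C(n.+1, k))%:R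
  - (n.+1)%:R * ('C(n, k.+1))%:R.
  by apply/eqP; rewrite eq_sym subr_eq -!natrM -!natrD bin_laguerre_rec.
rewrite /laguerre_coef !mulrA bin_rec factS natrM exprS.
have fact_neq0 : (k`!)%:R != 0 :> R by rewrite pnatr_eq0 -lt0n fact_gt0.
by field; rewrite fact_neq0 nat1r pnatr_eq0.
Qed.

Lemma QLpoly_rec n : (n.+2)%:R *: Q n.+2 =
  ((2 * n + 3)%:R *: (1 - 'X) - 'X) * Q n.+1 - (n.+1)%:R *: ((1 - 'X) ^+ 2 * Q n).
Proof.
rewrite !QLpolyE mulrBl -scalerAl mulX_homog expr2 -mulrA.
rewrite !mul_1subX_homog ?laguerre_coef_small //.
rewrite /homog !scaler_sumr -!sumrB; apply: eq_bigr => k _.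
by rewrite !scalerA -!scalerBl laguerre_coef_rec.
Qed.

Lemma QLpoly_size n : (size (Q n) <= n.+1)%N.
Proof. exact: size_poly. Qed.

Lemma QLpoly_at0_gt0 n : 0 < (Q n).[0].
Proof. by rewrite QLpoly_at0 ltr01. Qed.

Lemma QLpoly_at1_sign n : 0 < (-1) ^+ n * (Q n).[1].
Proof. by rewrite QLpoly_at1 mulrA -expr2 sqrr_sign mul1r invr_gt0 ltr0n fact_gt0. Qed.

Lemma QLpoly_root_rec n y : 0 < y < 1 -> root (Q n.+1) y ->
  exists2 c, 0 < c & (Q n.+2).[y] = - (c * (Q n).[y]).
Proof.
move=> /andP[_ y_lt1] /rootP Qy0.
have := congr1 (horner^~ y) (QLpoly_rec n).
rewrite hornerZ hornerD hornerN hornerM Qy0 mulr0 add0r hornerZ hornerM horner_exp.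
rewrite hornerD hornerN hornerX hornerC => rec_y.
exists ((n.+1)%:R * (1 - y) ^+ 2 / (n.+2)%:R).
  by rewrite divr_gt0 ?mulr_gt0 ?exprn_gt0 ?subr_gt0 ?ltr0n.
apply: (mulfI (_ : (n.+2)%:R != 0)); first by rewrite pnatr_eq0.
by rewrite rec_y; field; rewrite -natrD pnatr_eq0.
Qed.

End LaguerreRecurrence.

Lemma QL_roots m (y : nat -> algR) : alternating_roots (QLpoly algR) m y ->
  (forall t, root (QL m) t <-> t \in map algRval (mkseq y m)) /\
  (forall t, t \in map algRval (mkseq y m) -> ~~ root (QL m)^`() t).
Proof.
move=> y_alt.
have [c c_neq0 Q_fact] := alternating_roots_factor (QLpoly_size _) (QLpoly_at0_gt0 _) y_alt.
have QL_fact : QL m = algRval c *: \prod_(w <- map algRval (mkseq y m)) ('X - w%:P).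
  by rewrite QL_QLpoly -(map_QLpoly algRval) Q_fact map_polyZ map_prod_XsubC big_map.
have algRc_neq0 : algRval c != 0 by rewrite fmorph_eq0.
rewrite QL_fact; split=> t; first by rewrite root_scaled_prod_XsubC.
apply: scaled_prod_XsubC_simple => //; rewrite (map_inj_uniq (fmorph_inj _)).
exact: increasing_upto_uniq y_alt.1.
Qed.

Theorem theorem5p3 (n : nat) :
  (forall z : algC, root (QL n) z -> z \is Num.real /\ 0 < z < 1) /\
  exists (s r : seq algC),
    size s = n.+1 /\ size r = n /\
    (forall x, root (QL n.+1) x <-> x \in s) /\
    (forall x, root (QL n) x <-> x \in r) /\
    (forall x, x \in s -> ~~ root (QL n.+1)^`() x) /\
    (forall x, x \in r -> ~~ root (QL n)^`() x) /\
    (forall i : nat, (i < n)%N -> s`_i < r`_i < s`_i.+1).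
Proof.
have Q_size := QLpoly_size algR; have Q_at0 := QLpoly_at0_gt0 algR.
have Q_at1 := QLpoly_at1_sign algR; have Q_rec := @QLpoly_root_rec algR.
have [x x_alt] := alternating_roots_exist Q_size Q_at0 Q_at1 Q_rec n.
have [z z_alt z_x_interlace] := alternating_roots_succ Q_size Q_at0 Q_at1 Q_rec x_alt.
have [x_roots x_simple] := QL_roots x_alt.
have [z_roots z_simple] := QL_roots z_alt.
split.
  move=> t /x_roots/mapP[w /mapP[i]]; rewrite mem_iota => /andP[_ lt_in] -> ->.
  by split; [exact: algRvalP | have [] := x_alt.2 i lt_in].
exists (map algRval (mkseq z n.+1)), (map algRval (mkseq x n)).
rewrite !size_map !size_iota; do 6!split=> //.
move=> i lt_in; rewrite !(nth_map (0 : algR)) ?nth_mkseq ?size_mkseq //; try lia.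
exact: z_x_interlace.
Qed.
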